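(* Let $A\in\mathbb{R}^{m\times d}$ have the phase retrieval property in $\mathbb{R}^d$. Then for any $b\in\mathbb{R}^m$, the number of solutions of $\min_{x\in\mathbb{R}^d}\|\,|Ax|-b\,\|^2$ is finite.
   Context: $\|\cdot\|$ is the Euclidean norm and $|Ax|$ the entrywise absolute value. $A$ has the phase retrieval property in $\mathbb{R}^d$ if for all $x,y\in\mathbb{R}^d$, $|Ax|=|Ay|$ implies $x=\pm y$. *)

From HB Require Import structures.
From mathcomp Require Import all_boot all_order all_algebra.
From mathcomp Require Import classical_sets cardinality reals.
Set Implicit Arguments. Unset Strict Implicit. Unset Printing Implicit Defensive.
Import Order.TTheory GRing.Theory Num.Theory.
Local Open Scope ring_scope.

Definition absv (R : realType) (m : nat) (v : 'cV[R]_m) : 'cV[R]_m :=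
  map_mx (fun a => `|a|) v.

Definition phase_retrieval (R : realType) (m d : nat) (A : 'M[R]_(m, d)) : Prop :=
  forall x y : 'cV[R]_d, absv (A *m x) = absv (A *m y) -> x = y \/ x = - y.

Definition pr_obj (R : realType) (m d : nat) (A : 'M[R]_(m, d)) (b : 'cV[R]_m)
  (x : 'cV[R]_d) : R :=
  \sum_(i < m) ((absv (A *m x)) i 0 - b i 0) ^+ 2.

Definition pr_solutions (R : realType) (m d : nat) (A : 'M[R]_(m, d)) (b : 'cV[R]_m)
  : set 'cV[R]_d :=
  [set x | forall y : 'cV[R]_d, pr_obj A b x <= pr_obj A b y].

From mathcomp Require Import all_boot all_order all_algebra.
From mathcomp Require Import classical_sets cardinality reals.
From mathcomp Require Import ring lra.
Set Implicit Arguments. Unset Strict Implicit. Unset Printing Implicit Defensive.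
Import Order.TTheory GRing.Theory Num.Theory.

Local Open Scope ring_scope.

(** Two minimizers [x], [y] for which [Ax] and [Ay] have the same sign pattern
  are equal: on that orthant [x |-> |Ax|] is linear, so by the parallelogram
  law the objective [f] at the midpoint [z] satisfies
  [f z = (f x + f y)/2 - || |Ax| - |Ay| ||^2 / 4], and minimality forces
  [|Ax| = |Ay|].  Phase retrieval then gives [x = +-y], and [x = -y] with equal
  sign patterns means [Ax = 0], hence [x = y = 0].  Solutions thus inject into
  the finitely many sign patterns. *)

Lemma normrD_same_sign (R : realDomainType) (u v : R) :
  (0 <= u) = (0 <= v) -> `|u + v| = `|u| + `|v|.
Proof.
case: (lerP 0 u) => hu hv.
  by rewrite !ger0_norm ?addr_ge0 -?hv.
have hv' : v < 0 by rewrite ltNge -hv.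
by rewrite !ltr0_norm ?opprD ?ltr_nwDl // ltW.
Qed.

Definition sqdist (R : numDomainType) (m : nat) (u v : 'cV[R]_m) : R :=
  \sum_(i < m) (u i 0 - v i 0) ^+ 2.

Lemma sqdist_ge0 (R : realDomainType) (m : nat) (u v : 'cV[R]_m) :
  0 <= sqdist u v.
Proof. by apply: sumr_ge0 => i _; exact: sqr_ge0. Qed.

Lemma sqdist_eq0 (R : realDomainType) (m : nat) (u v : 'cV[R]_m) :
  sqdist u v = 0 -> u = v.
Proof.
move=> /psumr_eq0P uv; apply/matrixP => i j; rewrite (ord1 j).
by apply/eqP; rewrite -subr_eq0 -sqrf_eq0 uv // => k _; exact: sqr_ge0.
Qed.

Lemma sqdist_midpoint (R : numFieldType) (m : nat) (u v c : 'cV[R]_m) :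
  sqdist (2^-1 *: (u + v)) c = (sqdist u c + sqdist v c) / 2 - sqdist u v / 4.
Proof.
rewrite /sqdist -big_split /= !mulr_suml -sumrB.
by apply: eq_bigr => i _; rewrite !mxE; field.
Qed.

Section SignPattern.

Variables (R : realType) (m d : nat) (A : 'M[R]_(m, d)).

Definition sign_pattern (x : 'cV[R]_d) : {ffun 'I_m -> bool} :=
  [ffun i => 0 <= (A *m x) i 0].

Lemma sign_patternP (x y : 'cV[R]_d) :
  sign_pattern x = sign_pattern y ->
  forall i, (0 <= (A *m x) i 0) = (0 <= (A *m y) i 0).
Proof. by move=> /ffunP sxy i; have := sxy i; rewrite !ffunE. Qed.

Lemma absv_midpoint (x y : 'cV[R]_d) :
  sign_pattern x = sign_pattern y ->
  absv (A *m (2^-1 *: (x + y))) = 2^-1 *: (absv (A *m x) + absv (A *m y)).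
Proof.
move=> /sign_patternP sxy; apply/matrixP => i j; rewrite (ord1 j).
rewrite -scalemxAr mulmxDr !mxE normrM [`|2^-1|]ger0_norm ?invr_ge0 ?ler0n //.
by rewrite normrD_same_sign //; have := sxy i; rewrite !mxE.
Qed.

Lemma pr_obj_midpoint (b : 'cV[R]_m) (x y : 'cV[R]_d) :
  sign_pattern x = sign_pattern y ->
  pr_obj A b (2^-1 *: (x + y)) =
  (pr_obj A b x + pr_obj A b y) / 2 - sqdist (absv (A *m x)) (absv (A *m y)) / 4.
Proof.
by move=> sxy; rewrite /pr_obj -/(sqdist _ b) absv_midpoint // sqdist_midpoint.
Qed.

Lemma pr_solutions_same_sign_absv (b : 'cV[R]_m) (x y : 'cV[R]_d) :
  pr_solutions A b x -> pr_solutions A b y -> sign_pattern x = sign_pattern y ->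
  absv (A *m x) = absv (A *m y).
Proof.
move=> minx miny sxy; apply: sqdist_eq0; apply/eqP; rewrite eq_le sqdist_ge0 andbT.
have := minx (2^-1 *: (x + y)); have := miny (2^-1 *: (x + y)).
rewrite pr_obj_midpoint //; lra.
Qed.

Lemma sign_patternN_ker (x : 'cV[R]_d) :
  sign_pattern (- x) = sign_pattern x -> A *m x = 0.
Proof.
move=> /sign_patternP sx; apply/matrixP => i j; rewrite (ord1 j) [RHS]mxE.
have := sx i; rewrite mulmxN [in X in X -> _]mxE oppr_ge0.
set a := (A *m x) i 0 => e; apply/eqP; rewrite eq_le -e andbb.
by case/orP: (le_total a 0) => // h; rewrite e.
Qed.

Lemma phase_retrieval_ker0 (x : 'cV[R]_d) :
  phase_retrieval A -> A *m x = 0 -> x = 0.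
Proof.
move=> PR Ax0; have : absv (A *m x) = absv (A *m 0) by rewrite Ax0 mulmx0.
by case/PR => // ->; rewrite oppr0.
Qed.

Lemma sign_pattern_inj_solutions (b : 'cV[R]_m) :
  phase_retrieval A -> {in pr_solutions A b &, injective sign_pattern}.
Proof.
move=> PR x y; rewrite !in_setE => minx miny sxy.
case: (PR _ _ (pr_solutions_same_sign_absv minx miny sxy)) => // xNy.
have Ay0 : A *m y = 0 by apply: sign_patternN_ker; rewrite -xNy.
by rewrite xNy (phase_retrieval_ker0 PR Ay0) oppr0.
Qed.

End SignPattern.

Theorem theorem3p3 (R : realType) (m d : nat) (A : 'M[R]_(m, d)) :
  phase_retrieval A ->
  forall b : 'cV[R]_m, finite_set (pr_solutions A b).
Proof.
move=> PR b.
by rewrite -(eq_finite_set (inj_card_eq (sign_pattern_inj_solutions PR))).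
Qed.
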